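(* Let $(X,d)$ be a pointed metric space and let $((x_i,y_i))_{i\in I}$ be a Lipschitz interpolating family in $\widetilde X$ for $\mathrm{Lip}_0(X)$ whose Lipschitz interpolation constant is $M$. The following are equivalent: (i) For every real Banach space $E$, $((x_i,y_i))_{i\in I}$ is a Lipschitz interpolating family for $\mathrm{Lip}_0(X,E)$ and its Lipschitz interpolation constant satisfies $M_E=M$. (ii) $((x_i,y_i))_{i\in I}$ has a Beurling set $(f_i)_{i\in I}$ of functions in $\mathrm{Lip}_0(X)$.
   Context: All spaces are real. $(X,d)$ is a metric space with base point $0$, $\widetilde{X}=\{(x,y)\in X\times X: x\neq y\}$. For a Banach space $E$, $\mathrm{Lip}_0(X,E)$ is the Banach space of Lipschitz $f:X\to E$ with $f(0)=0$, normed by $\|f\|=\sup_{(x,y)\in\widetilde X}\|f(x)-f(y)\|/d(x,y)$; $\mathrm{Lip}_0(X)=\mathrm{Lip}_0(X,\mathbb R)$. $\ell_\infty(I,E)$ is the space of bounded families in $E$ with sup norm. For a family $((x_i,y_i))_{i\in I}$ in $\widetilde X$, $T_E:\mathrm{Lip}_0(X,E)\to\ell_\infty(I,E)$ is $T_E(f)=\big((f(x_i)-f(y_i))/d(x_i,y_i)\big)_{i\in I}$; the family is Lipschitz interpolating for $\mathrm{Lip}_0(X,E)$ if $T_E$ is surjective, with constant $M_E=\inf\{K>0:\forall v\in\ell_\infty(I,E),\ \|v\|_\infty\le1,\ \exists f\in\mathrm{Lip}_0(X,E),\ \|f\|\le K,\ T_E(f)=v\}$. ''Lipschitz interpolating for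 $\mathrm{Lip}_0(X)$ with constant $M$'' is the case $E=\mathbb R$, with $M=\inf\{K\ge1:\dots\}$ defined analogously. A Beurling set of functions in $\mathrm{Lip}_0(X)$ for the family is a family $(f_i)_{i\in I}$ of functions $f_i:X\to\mathbb R$ with $f_i(0)=0$, $(f_i(x_j)-f_i(y_j))/d(x_j,y_j)=\delta_{ij}$ for all $i,j\in I$, and $\sup_{(x,y)\in\widetilde X}\sum_{i\in I}|f_i(x)-f_i(y)|/d(x,y)\leq M$. *)

From HB Require Import structures.
From mathcomp Require Import all_boot all_order all_algebra.
From mathcomp Require Import all_classical all_reals all_analysis.
From mathcomp Require Import Rstruct Rstruct_topology.
Set Implicit Arguments. Unset Strict Implicit. Unset Printing Implicit Defensive.
Import Order.TTheory GRing.Theory Num.Theory.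
Import numFieldNormedType.Exports.
Local Open Scope classical_set_scope.
Local Open Scope ring_scope.

Notation RR := Rdefinitions.R.

Definition is_metric (X : Type) (d : X -> X -> RR) : Prop :=
  (forall x y, 0 <= d x y) /\
  (forall x y, d x y = 0 <-> x = y) /\
  (forall x y, d x y = d y x) /\
  (forall x y z, d x z <= d x y + d y z).

Definition lip_le (X : Type) (d : X -> X -> RR) (E : normedModType RR)
  (f : X -> E) (K : RR) : Prop :=
  forall x y, x <> y -> `|f x - f y| / d x y <= K.

Definition in_Lip0 (X : Type) (d : X -> X -> RR) (x0 : X) (E : normedModType RR)
  (f : X -> E) : Prop :=
  f x0 = 0 /\ exists K, lip_le d f K.

Definition interp_eq (X I : Type) (d : X -> X -> RR) (xs ys : I -> X)
  (E : normedModType RR) (f : X -> E) (v : I -> E) : Prop :=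
  forall i, (d (xs i) (ys i))^-1 *: (f (xs i) - f (ys i)) = v i.

Definition lip_interpolating (X I : Type) (d : X -> X -> RR) (x0 : X)
  (xs ys : I -> X) (E : normedModType RR) : Prop :=
  forall v : I -> E, (exists B, forall i, `|v i| <= B) ->
    exists f : X -> E, in_Lip0 d x0 f /\ interp_eq d xs ys f v.

Definition interp_set (X I : Type) (d : X -> X -> RR) (x0 : X)
  (xs ys : I -> X) (E : normedModType RR) (P : RR -> Prop) : set RR :=
  [set K | P K /\ forall v : I -> E, (forall i, `|v i| <= 1) ->
     exists f : X -> E, in_Lip0 d x0 f /\ lip_le d f K /\ interp_eq d xs ys f v].

Definition interp_const (X I : Type) (d : X -> X -> RR) (x0 : X)
  (xs ys : I -> X) (E : normedModType RR) : RR :=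
  inf (interp_set d x0 xs ys E (fun K => 0 < K)).

Definition interp_const_R (X I : Type) (d : X -> X -> RR) (x0 : X)
  (xs ys : I -> X) : RR :=
  inf (interp_set d x0 xs ys RR^o (fun K => 1 <= K)).

(* Beurling set of functions with constant M; the (possibly infinite) sum of
   nonnegative terms sum_i |f_i x - f_i y| / d(x,y) <= M is expressed as:
   every finite sub-sum (over distinct indices) is <= M. *)
Definition beurling_set (X I : Type) (d : X -> X -> RR) (x0 : X)
  (xs ys : I -> X) (M : RR) (fs : I -> X -> RR) : Prop :=
  (forall i, fs i x0 = 0) /\
  (forall i j, (fs i (xs j) - fs i (ys j)) / d (xs j) (ys j) = (`[< i = j >] : bool)%:R) /\
  (forall x y, x <> y -> forall (n : nat) (g : 'I_n -> I), injective g ->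
     \sum_(k < n) `|fs (g k) x - fs (g k) y| / d x y <= M).

From HB Require Import structures.
From mathcomp Require Import all_boot all_order all_algebra.
From mathcomp Require Import all_classical all_reals all_analysis.
From mathcomp Require Import Rstruct Rstruct_topology.
From mathcomp Require Import lra.
Set Implicit Arguments. Unset Strict Implicit. Unset Printing Implicit Defensive.
Import Order.TTheory GRing.Theory Num.Theory.
Import numFieldNormedType.Exports.
Local Open Scope classical_set_scope.
Local Open Scope ring_scope.

(* (ii) => (i): for a Beurling family (f_i) and bounded data (v_i) in a Banach space E,
   the series x |-> sum_i f_i(x) v_i converges unconditionally, since
   sum_i |f_i(x)| <= M d(x, 0); it interpolates (v_i) with Lipschitz constant
   M sup_i |v_i|, so M_E <= M.  Conversely, for a unit vector e of E the map
   z |-> inf_t (t + |z - t e|) is 1-Lipschitz and shifts by s along s e, so it turns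
   E-valued interpolants into real ones with the same constant: M <= M_E.
   (i) => (ii): interpolating the unit vectors of l1(I) with constant M + eps and taking
   coordinates gives a Beurling family for M + eps; a cluster point of these families as
   eps -> 0, in the product space R^(I x X) (Tychonoff), is a Beurling family for M.
   That M is the infimum of a nonempty set (rather than the junk value inf set0 = 0)
   comes from interpolation in l1(N): real data v_n needing constants 4^n, glued with
   weights 2^-n into one l1(N)-valued datum, would have a common Lipschitz interpolant. *)

Lemma big_uniq_subset (T : eqType) (V : nmodType) (f : T -> V) (s r : seq T) :
  uniq s -> uniq r -> {subset s <= r} ->
  \sum_(t <- r) f t = \sum_(t <- s) f t + \sum_(t <- r | t \notin s) f t.
Proof.
move=> s_uniq r_uniq sr; rewrite (bigID (mem s)) /=; congr (_ + _).
rewrite -big_filter; apply: perm_big; apply: uniq_perm => //.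
  exact: filter_uniq.
by move=> t; rewrite mem_filter; apply/andP/idP => [[]//|ts]; split => //; apply: sr.
Qed.

Lemma ler_sum_uniq_subset (R : numDomainType) (T : eqType) (f : T -> R) (s r : seq T) :
  (forall t, 0 <= f t) -> uniq s -> uniq r -> {subset s <= r} ->
  \sum_(t <- s) f t <= \sum_(t <- r) f t.
Proof.
move=> f_ge0 s_uniq r_uniq sr; rewrite (big_uniq_subset f s_uniq r_uniq sr) lerDl.
exact: sumr_ge0.
Qed.

Lemma undup_cat_subset (T : eqType) (s1 s2 : seq T) :
  {subset s1 <= undup (s1 ++ s2)} /\ {subset s2 <= undup (s1 ++ s2)}.
Proof. by split => t t_s; rewrite mem_undup mem_cat t_s ?orbT. Qed.

Lemma sumr_const_seq (T : Type) (V : nmodType) (s : seq T) (x : V) :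
  \sum_(t <- s) x = x *+ size s.
Proof. by rewrite big_const_seq count_predT iter_addr_0. Qed.

Lemma sum_halfpow_le (R : realFieldType) N :
  \sum_(0 <= i < N) (2^-1 : R) ^+ i <= 2.
Proof.
suff geom : \sum_(0 <= i < N) (2^-1 : R) ^+ i + 2 * 2^-1 ^+ N = 2.
  by rewrite -[leRHS]geom lerDl mulr_ge0 // exprn_ge0.
elim: N => [|N IH]; first by rewrite big_geq // add0r expr0 mulr1.
rewrite big_nat_recr //= -addrA exprS mulrA mulfV ?pnatr_eq0 // mul1r.
lra.
Qed.

Lemma ler_divSn (R : archiFieldType) (c : R) n m :
  0 <= c -> (n <= m)%N -> c / m.+1%:R <= c / n.+1%:R.
Proof.
move=> c0 nm; apply: ler_wpM2l => //.
by rewrite lef_pV2 ?posrE ?ltr0Sn // ler_nat ltnS.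
Qed.

Lemma divSn_lt_eventually (R : archiFieldType) (c e : R) : 0 <= c -> 0 < e ->
  exists N, forall n, (N <= n)%N -> c / n.+1%:R < e.
Proof.
move=> c0 e0; have ce0 : 0 <= c / e by rewrite divr_ge0 // ltW.
exists (Num.Def.archi_bound (c / e)) => n Nn.
rewrite ltr_pdivrMr ?ltr0Sn // -ltr_pdivrMl // mulrC.
apply: lt_le_trans (archi_boundP ce0) _.
by rewrite ler_nat; exact: leqW.
Qed.

Section HarmonicCompleteness.
Variable R : realType.

(* Completeness for sequences with the explicit Cauchy modulus c/(n+1): it implies
   completeness (harmonic_complete_cvg) and is easy to check coordinatewise in l1. *)
Definition harmonic_complete (V : normedModType R) :=
  forall (u : nat -> V) (c : R), 0 <= c ->
    (forall n m, (n <= m)%N -> `|u m - u n| <= c / n.+1%:R) ->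
    exists S, forall n, `|S - u n| <= c / n.+1%:R.

Lemma complete_harmonic_complete (E : completeNormedModType R) : harmonic_complete E.
Proof.
move=> u c c0 u_osc.
have : cvg (u @ \oo).
  apply/cauchy_cvgP/cauchyP => e e0.
  have [N hN] := divSn_lt_eventually c0 e0.
  exists (u N); exists N => // m /= Nm.
  rewrite -ball_normE /ball_ /= distrC.
  exact: le_lt_trans (u_osc _ _ Nm) (hN N (leqnn N)).
move/cvg_ex => [S /cvgrPdist_le S_lim]; exists S => n.
apply/ler_addgt0Pr => e e0.
have [N _ hN] := S_lim e e0.
have := ler_normD (S - u (maxn N n)) (u (maxn N n) - u n).
rewrite addrA subrK => /le_trans; apply.
by rewrite addrC; apply: lerD; [exact: u_osc (leq_maxr _ _) | exact: hN (leq_maxl _ _)].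
Qed.

Lemma harmonic_complete_cvg (V : normedModType R) : harmonic_complete V ->
  forall F : set_system V, ProperFilter F -> cauchy F -> cvg F.
Proof.
move=> V_complete F FF /(cauchyP F) F_cauchy.
have /choice [p p_ball] : forall n : nat, exists x : V, F (ball x n.+1%:R^-1).
  by move=> n; apply: F_cauchy; rewrite invr_gt0 ltr0Sn.
have p_osc n m : (n <= m)%N -> `|p m - p n| <= 2 / n.+1%:R.
  move=> nm; have [z [zm zn]] := filter_ex (filterI (p_ball m) (p_ball n)).
  rewrite -ball_normE /ball_ /= in zm zn.
  apply: le_trans (ler_distD z _ _) _; rewrite (distrC z).
  have := ler_divSn (ler01 : (0 : R) <= 1) nm; rewrite !mul1r => mn.
  by rewrite -[2]/(1 + 1) mulrDl mul1r lerD ?(ltW zn) ?(ltW (lt_le_trans zm mn)).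
have [L pL] := V_complete p 2 (ler0n R 2) p_osc.
apply/cvg_ex; exists L => A /nbhs_ballP [e e0 eA].
have [N hN] := divSn_lt_eventually (ler0n _ 3) e0.
apply: filterS (p_ball N) => z zN; apply: eA.
rewrite -ball_normE /ball_ /= in zN *.
apply: le_lt_trans (ler_distD (p N) _ _) _; apply: le_lt_trans (hN N (leqnn N)).
have -> : (3 : R) = 2 + 1 by lra.
by rewrite mulrDl mul1r lerD // ?pL // ltW.
Qed.

End HarmonicCompleteness.

Section AbsSummable.
Variables (R : realType) (T : Type).
Local Notation T' := {classic T}.

Definition l1_le (a : T -> R) (C : R) :=
  forall s : seq T', uniq s -> \sum_(t <- s) `|a t| <= C.

Lemma l1_leP a C : l1_le a C <->
  forall n (g : 'I_n -> T), injective g -> \sum_(k < n) `|a (g k)| <= C.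
Proof.
split=> [aC n g g_inj | aC s s_uniq].
  have := aC (map (g : 'I_n -> T') (enum 'I_n)).
  by rewrite big_map big_enum; apply; rewrite map_inj_uniq ?enum_uniq.
by rewrite big_tnth; apply: aC; exact: (elimT (tuple_uniqP (in_tuple s)) s_uniq).
Qed.

Lemma l1_le_coord a C t : l1_le a C -> `|a t| <= C.
Proof. by move=> aC; have := aC [:: (t : T')] isT; rewrite big_seq1. Qed.

Definition l1_sums (a : T -> R) : set R :=
  [set x | exists2 s : seq T', uniq s & x = \sum_(t <- s) `|a t|].

Lemma l1_sums_has_sup a C : l1_le a C -> has_sup (l1_sums a).
Proof.
move=> aC; split; first by exists 0, [::]; rewrite ?big_nil.
by exists C => _ [s s_uniq ->]; exact: aC.
Qed.

Lemma l1_le_sup a C : l1_le a C -> l1_le a (sup (l1_sums a)).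
Proof.
by move=> aC s s_uniq; apply: sup_upper_bound; [exact: l1_sums_has_sup aC | exists s].
Qed.

Lemma sup_l1_sums_le a C : l1_le a C -> sup (l1_sums a) <= C.
Proof.
move=> aC; apply: ge_sup; first by exists 0, [::]; rewrite ?big_nil.
by move=> _ [s s_uniq ->]; exact: aC.
Qed.

Lemma l1_le_tail a C eps : l1_le a C -> 0 < eps ->
  exists2 G : seq T', uniq G & forall H : seq T', uniq H -> {subset G <= H} ->
    \sum_(t <- H | t \notin G) `|a t| <= eps.
Proof.
move=> aC eps0; have [_ [G G_uniq ->] G_large] := sup_adherent eps0 (l1_sums_has_sup aC).
exists G => // H H_uniq GH; have := l1_le_sup aC H_uniq.
rewrite (big_uniq_subset _ G_uniq H_uniq GH); lra.
Qed.

End AbsSummable.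

Lemma ler_normB2 (R : numDomainType) (V : normedZmodType R) (x y z w : V) :
  `|(x - y) - (z - w)| <= `|x - z| + `|y - w|.
Proof.
have -> : x - y - (z - w) = (x - z) - (y - w).
  by rewrite !opprB addrACA [RHS]addrACA [- z + _]addrC.
exact: ler_normB.
Qed.

Section UnconditionalSum.
Variables (R : realType) (T : Type) (E : normedModType R).
Local Notation T' := {classic T}.

Definition has_usum (a : T -> R) (v : T -> E) (S : E) :=
  forall eps, 0 < eps -> exists2 G : seq T', uniq G &
    forall H : seq T', uniq H -> {subset G <= H} ->
      `|S - \sum_(t <- H) a t *: v t| <= eps.

Lemma has_usum_unique a v S1 S2 : has_usum a v S1 -> has_usum a v S2 -> S1 = S2.
Proof.
move=> S1a S2a; apply/eqP; rewrite -subr_eq0 -normr_le0.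
apply/ler_addgt0Pr => e e0; rewrite add0r.
have e2 : 0 < e / 2 by rewrite divr_gt0.
have [G1 G1_uniq G1S] := S1a _ e2; have [G2 G2_uniq G2S] := S2a _ e2.
have [G1H G2H] := undup_cat_subset G1 G2.
have := G1S _ (undup_uniq _) G1H; have := G2S _ (undup_uniq _) G2H.
set s := \sum_(t <- _) _ => S2s S1s.
apply: le_trans (ler_distD s _ _) _.
by rewrite (distrC s) [leRHS](splitr e) lerD.
Qed.

Lemma has_usum0 v : has_usum (fun=> 0) v 0.
Proof.
move=> e e0; exists [::] => // H _ _.
by rewrite big1 ?subrr ?normr0 ?ltW // => t _; rewrite scale0r.
Qed.

Lemma has_usum_delta v (j : T) : has_usum (fun t => (`[< t = j >] : bool)%:R) v (v j).
Proof.
move=> e e0; exists [:: (j : T')] => // H H_uniq jH.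
rewrite (bigD1_seq (j : T')) ?jH ?mem_seq1 //= asboolT // scale1r.
rewrite big1 ?addr0 ?subrr ?normr0 ?ltW // => t tj.
by rewrite asboolF ?scale0r // => t_j; rewrite t_j eqxx in tj.
Qed.

Lemma has_usumB a b v Sa Sb : has_usum a v Sa -> has_usum b v Sb ->
  has_usum (fun t => a t - b t) v (Sa - Sb).
Proof.
move=> Saa Sbb e e0; have e2 : 0 < e / 2 by rewrite divr_gt0.
have [Ga Ga_uniq GaS] := Saa _ e2; have [Gb Gb_uniq GbS] := Sbb _ e2.
have [GaH GbH] := undup_cat_subset Ga Gb.
exists (undup (Ga ++ Gb)) => [|H H_uniq GH]; first exact: undup_uniq.
have := GaS H H_uniq (fun t tGa => GH t (GaH t tGa)).
have := GbS H H_uniq (fun t tGb => GH t (GbH t tGb)).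
have -> : \sum_(t <- H) (a t - b t) *: v t =
    \sum_(t <- H) a t *: v t - \sum_(t <- H) b t *: v t.
  by rewrite -sumrB; apply: eq_bigr => t _; rewrite scalerBl.
move=> Sb_close Sa_close; apply: le_trans (ler_normB2 _ _ _ _) _.
by rewrite [leRHS](splitr e) lerD.
Qed.

Lemma has_usumZ a v S c : has_usum a v S -> has_usum (fun t => c * a t) v (c *: S).
Proof.
move=> Sa e e0; have c1 : 0 < `|c| + 1 by rewrite ltr_wpDl.
have [G G_uniq GS] := Sa _ (divr_gt0 e0 c1); exists G => // H H_uniq GH.
under eq_bigr => t _ do rewrite -scalerA.
rewrite -scaler_sumr -scalerBr normrZ.
apply: le_trans (ler_wpM2l (normr_ge0 c) (GS H H_uniq GH)) _.
by rewrite mulrA ler_pdivrMr // mulrDr mulr1 mulrC lerDl ltW.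
Qed.

Lemma has_usum_norm_le a v S C B : has_usum a v S -> l1_le a C ->
  0 <= B -> (forall t, `|v t| <= B) -> `|S| <= B * C.
Proof.
move=> Sa aC B0 vB; apply/ler_addgt0Pr => e e0.
have [G G_uniq GS] := Sa _ e0.
have partial_le : `|\sum_(t <- G) a t *: v t| <= B * C.
  apply: le_trans (ler_norm_sum _ _ _) _.
  apply: le_trans (_ : \sum_(t <- G) B * `|a t| <= _).
    by apply: ler_sum => t _; rewrite normrZ mulrC ler_wpM2r.
  by rewrite -mulr_sumr ler_wpM2l // aC.
rewrite -(subrK (\sum_(t <- G) a t *: v t) S).
by apply: le_trans (ler_normD _ _) _; rewrite addrC lerD // GS.
Qed.

Lemma partial_sum_tail (a : T -> R) (v : T -> E) (C B eps : R) :
  l1_le a C -> 0 <= B -> (forall t, `|v t| <= B) -> 0 < eps ->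
  exists2 G : seq T', uniq G & forall H : seq T', uniq H -> {subset G <= H} ->
    `|\sum_(t <- H) a t *: v t - \sum_(t <- G) a t *: v t| <= B * eps.
Proof.
move=> aC B0 vB eps0; have [G G_uniq G_tail] := l1_le_tail aC eps0.
exists G => // H H_uniq GH.
rewrite (big_uniq_subset _ G_uniq H_uniq GH) addrAC subrr add0r.
apply: le_trans (ler_norm_sum _ _ _) _.
apply: le_trans (_ : \sum_(t <- H | t \notin G) B * `|a t| <= _).
  by apply: ler_sum => t _; rewrite normrZ mulrC ler_wpM2r.
by rewrite -mulr_sumr ler_wpM2l // G_tail.
Qed.

End UnconditionalSum.

Lemma has_usum_exists (R : realType) (T : Type) (E : completeNormedModType R)
    (a : T -> R) (v : T -> E) C B :
  l1_le a C -> 0 <= B -> (forall t, `|v t| <= B) -> exists S, has_usum a v S.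
Proof.
move=> aC B0 vB.
have /choice [G G_tail] : forall n : nat, exists G : seq {classic T}, uniq G /\
    forall H : seq {classic T}, uniq H -> {subset G <= H} ->
      `|\sum_(t <- H) a t *: v t - \sum_(t <- G) a t *: v t| <= B / n.+1%:R.
  move=> n; have [|G G_uniq GH] := partial_sum_tail aC B0 vB (_ : 0 < n.+1%:R^-1).
    by rewrite invr_gt0 ltr0Sn.
  by exists G.
pose u n := \sum_(t <- G n) a t *: v t.
have [S Su] : exists S, forall n, `|S - u n| <= B *+ 2 / n.+1%:R.
  apply: (@complete_harmonic_complete _ E u _ (mulrn_wge0 2 B0)) => n m nm.
  have [GnH GmH] := undup_cat_subset (G n) (G m).
  have := (G_tail n).2 _ (undup_uniq _) GnH; have := (G_tail m).2 _ (undup_uniq _) GmH.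
  set s := \sum_(t <- _) _ => sm sn.
  apply: le_trans (ler_distD s _ _) _; rewrite (distrC _ s).
  by rewrite mulr2n mulrDl lerD // (le_trans sm) // ler_divSn.
exists S => e e0; have [N hN] := divSn_lt_eventually (mulrn_wge0 3 B0) e0.
exists (G N) => [|H H_uniq GH]; first exact: (G_tail N).1.
apply: le_trans (ler_distD (u N) _ _) _; rewrite (distrC (u N)).
apply: ltW; apply: le_lt_trans (hN N (leqnn N)).
by rewrite mulrSr mulrDl lerD // (G_tail N).2.
Qed.

Lemma l1_le_halfpow (R : realType) (a : nat -> R) :
  (forall n, `|a n| <= 2^-1 ^+ n) -> l1_le a 2.
Proof.
move=> a_le s0 s0_uniq; pose s := map (fun t : {classic nat} => t : nat) s0.
have s_uniq : uniq s by rewrite map_inj_uniq.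
have -> : \sum_(t <- s0) `|a t| = \sum_(t <- s) `|a t| by rewrite big_map.
have s_iota : {subset s <= index_iota 0 (\max_(t <- s) t).+1}.
  by move=> t ts; rewrite mem_index_iota ltnS leq_bigmax_seq.
apply: le_trans (ler_sum _ (fun t _ => a_le t)) _.
have halfpow_ge0 (t : nat) : 0 <= (2^-1 : R) ^+ t by rewrite exprn_ge0 // invr_ge0.
apply: le_trans (@sum_halfpow_le R _).
apply: (ler_sum_uniq_subset halfpow_ge0 s_uniq _ s_iota); exact: iota_uniq.
Qed.

Section L1Space.
Variables (R : realType) (T : Type).
Local Notation T' := {classic T}.

Definition l1_pred : {pred T -> R^o} := fun u => `[< exists C, l1_le u C >].
Record l1 := L1 { l1v : T -> R^o; l1P : l1v \in l1_pred }.
HB.instance Definition _ := [isSub for l1v].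
HB.instance Definition _ := [Choice of l1 by <:].

Lemma l1_submod_closed : submod_closed l1_pred.
Proof.
split; first by apply/asboolP; exists 0 => s _; rewrite big1 // => t _; rewrite normr0.
move=> c u v /asboolP [Cu uCu] /asboolP [Cv vCv]; apply/asboolP.
exists (`|c| * Cu + Cv) => s s_uniq.
apply: le_trans (_ : \sum_(t <- s) (`|c| * `|u t| + `|v t|) <= _).
  by apply: ler_sum => t _; rewrite -normrM; exact: ler_normD.
by rewrite big_split /= -mulr_sumr lerD ?ler_wpM2l ?uCu ?vCv.
Qed.

HB.instance Definition _ :=
  GRing.isSubmodClosed.Build R (T -> R^o) l1_pred l1_submod_closed.
HB.instance Definition _ := [SubChoice_isSubLmodule of l1 by <:].

Lemma l1vD (u w : l1) t : l1v (u + w) t = l1v u t + l1v w t. Proof. by []. Qed.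
Lemma l1vB (u w : l1) t : l1v (u - w) t = l1v u t - l1v w t. Proof. by []. Qed.
Lemma l1vZ c (u : l1) t : l1v (c *: u) t = c * l1v u t. Proof. by []. Qed.
Lemma l1v0 t : l1v (0 : l1) t = 0. Proof. by []. Qed.

Lemma l1vP (u : l1) : exists C, l1_le (l1v u) C.
Proof. exact/asboolP/l1P. Qed.

Definition l1_norm (u : l1) : R := sup (l1_sums (l1v u)).

Lemma l1_le_norm (u : l1) : l1_le (l1v u) (l1_norm u).
Proof. by have [C uC] := l1vP u; exact: l1_le_sup uC. Qed.

Lemma l1_norm_le (u : l1) C : l1_le (l1v u) C -> l1_norm u <= C.
Proof. exact: sup_l1_sums_le. Qed.

Lemma l1_norm_coord (u : l1) t : `|l1v u t| <= l1_norm u.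
Proof. exact: l1_le_coord (l1_le_norm u). Qed.

Lemma l1_normD (u w : l1) : l1_norm (u + w) <= l1_norm u + l1_norm w.
Proof.
apply: l1_norm_le => s s_uniq.
apply: le_trans (_ : \sum_(t <- s) (`|l1v u t| + `|l1v w t|) <= _).
  by apply: ler_sum => t _; rewrite l1vD ler_normD.
by rewrite big_split lerD // l1_le_norm.
Qed.

Lemma l1_normZ_le c (u : l1) : l1_norm (c *: u) <= `|c| * l1_norm u.
Proof.
apply: l1_norm_le => s s_uniq.
under eq_bigr => t _ do rewrite l1vZ normrM.
by rewrite -mulr_sumr ler_wpM2l // l1_le_norm.
Qed.

Lemma l1_normZ c (u : l1) : l1_norm (c *: u) = `|c| * l1_norm u.
Proof.
apply/eqP; rewrite eq_le l1_normZ_le /=.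
have [->|c0] := eqVneq c 0.
  by rewrite normr0 mul0r; have := l1_le_norm (0 *: u) (s := [::]) isT; rewrite big_nil.
have := l1_normZ_le c^-1 (c *: u); rewrite scalerA mulVf // scale1r normrV ?unitfE //.
by rewrite -ler_pdivlMl ?normr_gt0.
Qed.

Lemma l1_norm_eq0 (u : l1) : l1_norm u = 0 -> u = 0.
Proof.
move=> u0; apply: val_inj; apply: funext => t /=.
by apply/eqP; rewrite -normr_le0 -u0 l1_norm_coord.
Qed.

HB.instance Definition _ :=
  Lmodule_isNormed.Build R l1 l1_normD l1_normZ l1_norm_eq0.

Lemma l1_normE (u : l1) : `|u| = l1_norm u. Proof. by []. Qed.

Lemma l1_harmonic_complete : harmonic_complete l1.
Proof.
move=> p c c0 p_osc.
have /choice [L pL] : forall t, exists S : R^o, forall n, `|S - l1v (p n) t| <= c / n.+1%:R.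
  move=> t; apply: (@complete_harmonic_complete _ R^o _ _ c0) => n m nm.
  by rewrite -l1vB; apply: le_trans (p_osc n m nm); exact: l1_norm_coord.
have L_close n : l1_le (fun t => L t - l1v (p n) t) (c / n.+1%:R).
  move=> s s_uniq; apply/ler_addgt0Pr => e e0.
  have [N hN] := divSn_lt_eventually (mulrn_wge0 (size s) c0) e0.
  pose m := maxn N n.
  apply: le_trans (_ : \sum_(t <- s) (c / m.+1%:R + `|l1v (p m - p n) t|) <= _).
    apply: ler_sum => t _; rewrite l1vB; apply: le_trans (ler_distD (l1v (p m) t) _ _) _.
    by rewrite lerD // pL.
  rewrite big_split sumr_const_seq [leLHS]addrC lerD //.
    by apply: le_trans (l1_le_norm _ s_uniq) _; exact: p_osc (leq_maxr _ _).
  by rewrite -mulrnAl ltW // hN // leq_maxl.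
have L_l1 : L \in l1_pred.
  apply/asboolP; exists (c / 1%:R + l1_norm (p 0)) => s s_uniq.
  apply: le_trans (_ : \sum_(t <- s) (`|L t - l1v (p 0) t| + `|l1v (p 0) t|) <= _).
    by apply: ler_sum => t _; rewrite -[X in `|X|](subrK (l1v (p 0) t)) ler_normD.
  by rewrite big_split lerD // ?L_close // l1_le_norm.
exists (L1 L_l1) => n; rewrite l1_normE; apply: l1_norm_le => s s_uniq.
exact: L_close.
Qed.

HB.instance Definition _ :=
  Uniform_isComplete.Build l1 (harmonic_complete_cvg l1_harmonic_complete).

Lemma l1_le_delta (j : T) : l1_le (fun t => (`[< t = j >] : bool)%:R : R^o) 1.
Proof.
move=> s s_uniq; have [js|njs] := boolP ((j : T') \in s).
  rewrite (bigD1_seq (j : T')) //= asboolT // normr1 big1 ?addr0 // => t tj.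
  by rewrite asboolF ?normr0 // => t_j; rewrite t_j eqxx in tj.
rewrite big_seq big1 ?ler01 // => t ts; rewrite asboolF ?normr0 // => t_j.
by rewrite -t_j ts in njs.
Qed.

Definition l1_delta (j : T) : l1 := L1 (asboolT (ex_intro _ _ (l1_le_delta j))).

Lemma l1_deltaE j t : l1v (l1_delta j) t = (`[< t = j >] : bool)%:R. Proof. by []. Qed.

Lemma l1_delta_norm j : `|l1_delta j| <= 1.
Proof. by rewrite l1_normE; apply: l1_norm_le; exact: l1_le_delta. Qed.

Lemma l1_delta_neq0 j : l1_delta j <> 0.
Proof.
move=> j0; have := l1_deltaE j j; rewrite j0 l1v0 asboolT // => /eqP.
by rewrite eq_sym oner_eq0.
Qed.

End L1Space.

Lemma inf_minimum (R : realType) (S : set R) m : S m -> lbound S m -> inf S = m.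
Proof.
move=> Sm m_lb; apply/eqP; rewrite eq_le ge_inf ?lb_le_inf //; last by exists m.
by exists m.
Qed.

Section LineCoordinate.
Variables (R : realType) (E : normedModType R) (e : E).
Hypothesis e_unit : `|e| = 1.

Definition line_coord (z : E) : R := inf [set t + `|z - t *: e| | t in [set: R]].

Lemma line_coord_lbound z : lbound [set t + `|z - t *: e| | t in [set: R]] (- `|z|).
Proof.
move=> _ [t _ <-].
have : `|t *: e| <= `|z - t *: e| + `|z|.
  by rewrite distrC -{1}(subrK z (t *: e)) ler_normD.
rewrite normrZ e_unit mulr1.
have : 0 <= t + `|t|.
  by case: (lerP 0 t) => t0; [rewrite ger0_norm ?addr_ge0 | rewrite ltr0_norm // subrr].
lra.
Qed.

Lemma line_coord_le z t : line_coord z <= t + `|z - t *: e|.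
Proof. by apply: ge_inf; [exists (- `|z|); exact: line_coord_lbound | exists t]. Qed.

Lemma line_coord_lipschitz z w : line_coord z <= line_coord w + `|z - w|.
Proof.
rewrite -lerBlDr; apply: lb_le_inf; first by exists (0 + `|w - 0 *: e|), 0.
move=> _ [t _ <-]; rewrite lerBlDr; apply: le_trans (line_coord_le z t) _.
rewrite -addrA lerD2l -[z - _](subrKA w) addrC; exact: ler_normD.
Qed.

Lemma line_coord_dist z w : `|line_coord z - line_coord w| <= `|z - w|.
Proof.
rewrite ler_norml; apply/andP; split; last by rewrite lerBlDl line_coord_lipschitz.
by rewrite lerNl opprB lerBlDl distrC line_coord_lipschitz.
Qed.

Lemma line_coord_shift_le z s : line_coord (z + s *: e) <= line_coord z + s.
Proof.
rewrite -lerBlDr; apply: lb_le_inf; first by exists (0 + `|z - 0 *: e|), 0.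
move=> _ [t _ <-]; rewrite lerBlDr; apply: le_trans (line_coord_le _ (t + s)) _.
by rewrite scalerDl opprD addrACA subrr addr0 addrAC.
Qed.

Lemma line_coord_shift z s : line_coord (z + s *: e) = line_coord z + s.
Proof.
apply/eqP; rewrite eq_le line_coord_shift_le /=.
have := line_coord_shift_le (z + s *: e) (- s).
rewrite -addrA -scalerDl subrr scale0r addr0; lra.
Qed.

End LineCoordinate.

Section ClusterPoints.
Variables (T : topologicalType) (F : set_system T) (g : T).
Hypothesis g_cluster : cluster F g.

Lemma cluster_closed (C : set T) : closed C -> F C -> C g.
Proof.
move=> C_closed FC; rewrite (closure_id C).1 //.
by move: g_cluster; rewrite clusterE; apply.
Qed.

Lemma cluster_le (R : realType) (phi : T -> R) c :
  continuous phi -> F [set p | phi p <= c] -> phi g <= c.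
Proof.
move=> phi_cont; apply: cluster_closed.
exact: preimage_closed (fun p _ => phi_cont p) (@closed_le R c).
Qed.

Lemma cluster_eq (R : realType) (phi : T -> R) c :
  continuous phi -> F [set p | phi p = c] -> phi g = c.
Proof.
move=> phi_cont; apply: cluster_closed.
exact: preimage_closed (fun p _ => phi_cont p) (@closed_eq R c).
Qed.

End ClusterPoints.

Section Interpolation.
Variables (X I : Type) (d : X -> X -> RR) (x0 : X) (xs ys : I -> X).
Hypothesis d_metric : is_metric d.
Hypothesis xs_neq_ys : forall i, xs i <> ys i.

Lemma metric_gt0 x y : x <> y -> 0 < d x y.
Proof.
case: d_metric => d_ge0 [d_eq0 _] xy; rewrite lt_neqAle d_ge0 andbT.
by apply/eqP => /esym /d_eq0.
Qed.

Lemma metric_xx x : d x x = 0.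
Proof. by case: d_metric => _ [d_eq0 _]; apply/d_eq0. Qed.

Definition interpolates_with (E : normedModType RR) (K : RR) :=
  forall v : I -> E, (forall i, `|v i| <= 1) ->
    exists f : X -> E, in_Lip0 d x0 f /\ lip_le d f K /\ interp_eq d xs ys f v.

Lemma interp_eqE (E : normedModType RR) (f : X -> E) v i :
  interp_eq d xs ys f v -> f (xs i) = f (ys i) + d (xs i) (ys i) *: v i.
Proof.
move=> fv; have d_neq0 : d (xs i) (ys i) != 0 by rewrite gt_eqF // metric_gt0.
by rewrite -(fv i) scalerA mulfV // scale1r addrC subrK.
Qed.

Lemma interp_comp_bounded (E E' : normedModType RR) (L : E -> E') (c K : RR)
    (f : X -> E) (v : I -> E) :
  {morph L : u w / u - w} -> scalable L -> 0 <= c -> (forall u, `|L u| <= c * `|u|) ->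
  in_Lip0 d x0 f -> lip_le d f K -> interp_eq d xs ys f v ->
  [/\ in_Lip0 d x0 (L \o f), lip_le d (L \o f) (c * K)
    & interp_eq d xs ys (L \o f) (L \o v)].
Proof.
move=> LB LZ c0 Lc [f0 _] fK fv.
have L0 : L 0 = 0 by rewrite -(subrr (0 : E)) LB subrr.
have LfK : lip_le d (L \o f) (c * K).
  move=> x y xy; rewrite /= -LB.
  apply: le_trans (ler_wpM2r _ (Lc _)) _; first by rewrite invr_ge0 (ltW (metric_gt0 xy)).
  by rewrite -mulrA ler_wpM2l // fK.
split=> //; last by move=> i; rewrite /= -LB -LZ fv.
by split; [rewrite /= f0 L0 | exists (c * K)].
Qed.

Lemma interpolates_with_scalar (E : normedModType RR) (e : E) K :
  e <> 0 -> interpolates_with E K -> interpolates_with RR^o K.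
Proof.
move=> e_neq0 EK w w1.
have e_norm_neq0 : `|e| != 0 by rewrite normr_eq0; apply/eqP.
pose u := `|e|^-1 *: e.
have u_unit : `|u| = 1 by rewrite normrZ normrV ?unitfE // normr_id mulVf.
have wu_le1 i : `|w i *: u| <= 1 by rewrite normrZ u_unit mulr1.
have [f [[f0 _] [fK fw]]] := EK _ wu_le1.
pose g x : RR^o := line_coord u (f x) - line_coord u 0.
have gK : lip_le d g K.
  move=> x y xy; apply: le_trans (fK x y xy); rewrite /g opprB addrA subrK.
  rewrite ler_wpM2r ?invr_ge0 ?(ltW (metric_gt0 xy)) //; exact: line_coord_dist.
exists g; split; [by split; [rewrite /g f0 subrr | exists K] | split => // i].
have d_neq0 : d (xs i) (ys i) != 0 by rewrite gt_eqF // metric_gt0.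
rewrite /g (interp_eqE i fw) scalerA line_coord_shift //.
by rewrite opprB addrA subrK addrAC subrr add0r /GRing.scale /= mulrA mulVf // mul1r.
Qed.

Lemma interpolates_with_ge1 (i0 : I) K : interpolates_with RR^o K -> 1 <= K.
Proof.
have one_le1 (i : I) : `|1 : RR^o| <= 1 by rewrite normr1.
move=> RK; have [g [_ [gK gv]]] := RK _ one_le1.
have := gK _ _ (@xs_neq_ys i0); rewrite (interp_eqE i0 gv) addrAC subrr add0r.
have d_gt0 := metric_gt0 (@xs_neq_ys i0).
by rewrite normrZ normr1 mulr1 gtr0_norm // mulfV // gt_eqF.
Qed.

Section BeurlingInterpolant.
Variables (M : RR) (fs : I -> X -> RR).
Hypothesis fs_beurling : beurling_set d x0 xs ys M fs.

Lemma beurling_l1_le x y : l1_le (fun i => fs i x - fs i y) (M * d x y).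
Proof.
case: fs_beurling => _ [_ fs_sum]; have [->|xy] := pselect (x = y).
  by move=> s _; rewrite metric_xx mulr0 big1 // => i _; rewrite subrr normr0.
apply/l1_leP => n g g_inj; have := fs_sum x y xy n g g_inj.
by rewrite -mulr_suml ler_pdivrMr // metric_gt0.
Qed.

Lemma beurling_l1_le0 x : l1_le (fun i => fs i x) (M * d x x0).
Proof.
move=> s s_uniq; have := beurling_l1_le x x0 s_uniq.
by under eq_bigr => i _ do rewrite (fs_beurling.1 i) subr0.
Qed.

Lemma beurling_ge1 (i0 : I) : 1 <= M.
Proof.
have d_gt0 := metric_gt0 (@xs_neq_ys i0).
have := l1_le_coord i0 (beurling_l1_le (xs i0) (ys i0)).
have := fs_beurling.2.1 i0 i0; rewrite asboolT // => /divr1_eq ->.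
by rewrite gtr0_norm // -ler_pdivrMr // mulfV // gt_eqF.
Qed.

Lemma beurling_interpolant (E : completeNormedModType RR) (v : I -> E) B :
  0 <= B -> (forall i, `|v i| <= B) ->
  exists f : X -> E, in_Lip0 d x0 f /\ lip_le d f (B * M) /\ interp_eq d xs ys f v.
Proof.
move=> B0 vB; case: fs_beurling => fs0 [fs_delta _].
have /choice [f f_sum] : forall x, exists S, has_usum (fun i => fs i x) v S.
  by move=> x; exact: has_usum_exists (beurling_l1_le0 x) B0 vB.
have f_diff x y := has_usumB (f_sum x) (f_sum y).
have fK : lip_le d f (B * M).
  move=> x y xy; rewrite ler_pdivrMr ?metric_gt0 // -mulrA.
  exact: has_usum_norm_le (f_diff x y) (beurling_l1_le x y) B0 vB.
exists f; split; [split; [|by exists (B * M)] | split => // j].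
  apply: has_usum_unique (f_sum x0) _.
  by rewrite (_ : (fun i => fs i x0) = fun=> 0); [exact: has_usum0 | apply: funext].
apply: has_usum_unique (has_usumZ (d (xs j) (ys j))^-1 (f_diff (xs j) (ys j))) _.
rewrite (_ : (fun i => _ * _) = fun i => (`[< i = j >] : bool)%:R).
  exact: has_usum_delta.
by apply: funext => i; rewrite mulrC fs_delta.
Qed.

End BeurlingInterpolant.

Lemma beurling_interp_const (i0 : I) M fs :
  M = interp_const_R d x0 xs ys -> beurling_set d x0 xs ys M fs ->
  forall E : completeNormedModType RR, (exists e : E, e <> 0) ->
    lip_interpolating d x0 xs ys E /\ interp_const d x0 xs ys E = M.
Proof.
move=> M_def fsB E [e e_neq0]; have M1 := beurling_ge1 fsB i0.
split=> [v [B vB]|].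
  have [f [f0 [_ fv]]] := beurling_interpolant fsB (le_trans (normr_ge0 _) (vB i0)) vB.
  by exists f.
apply: inf_minimum.
  split; first exact: lt_le_trans ltr01 M1.
  by move=> v v1; have := beurling_interpolant fsB ler01 v1; rewrite mul1r.
move=> K [_ EK]; have RK := interpolates_with_scalar e_neq0 EK.
rewrite M_def; apply: ge_inf; first by exists 1 => k [].
split; [apply: (interpolates_with_ge1 i0)|]; exact: RK.
Qed.

Lemma scalar_interp_set_neq0 : lip_interpolating d x0 xs ys (l1 RR nat) ->
  interp_set d x0 xs ys RR^o (fun K => 1 <= K) !=set0.
Proof.
move=> l1_interp; apply: contrapT => no_K.
have /choice [v v_bad] : forall n : nat, exists v : I -> RR^o, (forall i, `|v i| <= 1) /\
    ~ exists f : X -> RR^o, in_Lip0 d x0 f /\ lip_le d f ((2 ^+ n) ^+ 2) /\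
      interp_eq d xs ys f v.
  move=> n; apply: contrapT => all_ok; apply: no_K.
  exists ((2 ^+ n) ^+ 2); split; first by rewrite !exprn_ege1 // ler1n.
  by move=> v v1; apply: contrapT => v_bad; apply: all_ok; exists v.
have V_l1 i : l1_le (fun n => 2^-1 ^+ n * v n i : RR^o) 2.
  apply: l1_le_halfpow => n; rewrite normrM ger0_norm ?exprn_ge0 ?invr_ge0 //.
  by rewrite ler_piMr ?exprn_ge0 ?invr_ge0 // (v_bad n).1.
pose V i : l1 RR nat := L1 (asboolT (ex_intro _ _ (V_l1 i))).
have V_le2 i : `|V i| <= 2 by rewrite l1_normE; apply: l1_norm_le; exact: V_l1.
have [F [F_lip0 FV]] := l1_interp V (ex_intro _ _ V_le2).
have [F0 [K FK]] := F_lip0.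
have [n Kn] : exists n : nat, K <= 2 ^+ n.
  exists (Num.Def.archi_bound `|K|); apply: le_trans (ler_norm K) _.
  apply: ltW; apply: lt_le_trans (archi_boundP (normr_ge0 K)) _.
  by rewrite -natrX ler_nat ltnW // ltn_expl.
apply: (v_bad n).2.
pose L (u : l1 RR nat) : RR^o := 2 ^+ n * l1v u n.
have LB : {morph L : u w / u - w} by move=> u w; rewrite /L l1vB mulrBr.
have LZ : scalable L by move=> c u; rewrite /L l1vZ /GRing.scale /= mulrCA.
have Lc u : `|L u| <= 2 ^+ n * `|u|.
  by rewrite normrM ger0_norm ?exprn_ge0 // ler_wpM2l ?exprn_ge0 // l1_normE l1_norm_coord.
have [LF0 LFK LFV] := interp_comp_bounded LB LZ (exprn_ge0 n (ler0n _ 2)) Lc F_lip0 FK FV.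
have LV : L \o V = v n.
  by apply: funext => i; rewrite /L /= mulrA -exprMn divff ?expr1n ?mul1r // pnatr_eq0.
exists (L \o F); split => //; split; last by rewrite -LV.
move=> x y xy; apply: le_trans (LFK x y xy) _.
by rewrite expr2 ler_wpM2l ?exprn_ge0.
Qed.

Lemma approx_beurling M eps : 0 < M -> interp_const d x0 xs ys (l1 RR I) = M ->
  0 < eps -> exists fs, beurling_set d x0 xs ys (M + eps) fs.
Proof.
rewrite /interp_const; set S := interp_set _ _ _ _ _ _ => M_gt0 SM eps0.
have S_inf : has_inf S.
  split; last by exists 0 => K [K0 _]; exact: ltW.
  by apply: contrapT => S0; move: M_gt0; rewrite -SM inf_out ?ltxx //; case.
have [K [_ EK] KM] := inf_adherent eps0 S_inf; rewrite SM in KM.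
have [F [F_lip0 [FK Fdelta]]] := EK _ (@l1_delta_norm _ _).
exists (fun i x => l1v (F x) i); split; [|split].
- by move=> i; rewrite F_lip0.1.
- move=> i j; move: (Fdelta j) => /(congr1 (fun u => l1v u i)).
  by rewrite l1vZ l1vB l1_deltaE mulrC.
- move=> x y xy n g g_inj; rewrite -mulr_suml ler_pdivrMr ?metric_gt0 //.
  have Fxy : l1_le (fun i => l1v (F x) i - l1v (F y) i) (l1_norm (F x - F y)).
    exact: l1_le_norm (F x - F y).
  apply: le_trans ((l1_leP _ _).1 Fxy n g g_inj) _.
  have := FK x y xy; rewrite ler_pdivrMr ?metric_gt0 // l1_normE => /le_trans; apply.
  by rewrite ler_wpM2r ?(ltW KM) ?(ltW (metric_gt0 xy)).
Qed.

Section BeurlingLimit.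
Import ArrowAsProduct.

Lemma cluster_bounded_seq (J : eqType) (h : nat -> J -> RR) (B : J -> RR) :
  (forall n j, `|h n j| <= B j) -> exists g : J -> RR, cluster (h @ \oo) g.
Proof.
move=> hB.
have [|g [_ g_cluster]] := @tychonoff J (fun=> RR) (fun j => `[- B j, B j]%classic)
  (fun j => @segment_compact RR _ _) (h @ \oo) (fmap_proper_filter _ _).
  by exists 0%N => // n _ j; rewrite /= in_itv /= -ler_norml hB.
by exists g.
Qed.

Lemma beurling_limit M :
  (forall n : nat, exists fs, beurling_set d x0 xs ys (M + n.+1%:R^-1) fs) ->
  exists fs, beurling_set d x0 xs ys M fs.
Proof.
move=> /choice [fs fsB].
pose h n (j : {classic (I * X)}) := fs n j.1 j.2.
have [|g g_cluster] := @cluster_bounded_seq _ h (fun j => (M + 1) * d j.2 x0).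
  move=> n [i x]; apply: le_trans (l1_le_coord i (beurling_l1_le0 (fsB n) x)) _.
  apply: ler_wpM2r; first exact: d_metric.1.
  by rewrite lerD2l invf_le1 ?ltr0Sn // ler1n.
have proj_cont (j : {classic (I * X)}) : continuous (fun p : {classic (I * X)} -> RR => p j).
  exact: (@proj_continuous _ (fun=> RR) j).
exists (fun i x => g (i, x)); split; [|split].
- move=> i; apply: (cluster_eq g_cluster (proj_cont (i, x0))).
  by exists 0%N => // n _; rewrite /h /= (fsB n).1.
- move=> i j; have d_neq0 : d (xs j) (ys j) != 0 by rewrite gt_eqF // metric_gt0.
  apply/(canLR (mulfK d_neq0)).
  apply: (cluster_eq g_cluster (phi := fun p => p (i, xs j) - p (i, ys j))).
    by move=> p; apply: (@continuousB RR RR^o); exact: proj_cont.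
  by exists 0%N => // n _; rewrite /h /= -(fsB n).2.1 divfK.
- move=> x y xy n k k_inj; apply/ler_addgt0Pr => e e0.
  have [N hN] := divSn_lt_eventually ler01 e0.
  rewrite -mulr_suml ler_pdivrMr ?metric_gt0 //.
  apply: (cluster_le g_cluster (phi := fun p => \sum_(l < n) `|p (k l, x) - p (k l, y)|)).
    apply: continuous_big => [|l _]; first exact: add_continuous.
    move=> p; have := @continuous_comp _ _ _ (fun q => q (k l, x) - q (k l, y) : RR^o)
      (@Num.Def.normr RR RR^o) p.
    apply; last exact: norm_continuous.
    by apply: (@continuousB RR RR^o); exact: proj_cont.
  exists N => // m Nm /=; have := (fsB m).2.2 x y xy n k k_inj.
  rewrite -mulr_suml ler_pdivrMr ?metric_gt0 // => /le_trans; apply.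
  by rewrite ler_wpM2r ?(ltW (metric_gt0 xy)) // lerD2l ltW // -[_^-1]mul1r hN.
Qed.

End BeurlingLimit.

End Interpolation.

Unset Implicit Arguments.

Theorem theorem5p4 (X : Type) (d : X -> X -> RR) (x0 : X) (I : Type)
  (xs ys : I -> X) (M : RR) :
  is_metric d ->
  (forall i, xs i <> ys i) ->
  inhabited I ->
  lip_interpolating d x0 xs ys RR^o ->
  M = interp_const_R d x0 xs ys ->
  ((forall E : completeNormedModType RR, (exists e : E, e <> 0) ->
      lip_interpolating d x0 xs ys E /\ interp_const d x0 xs ys E = M)
   <->
   (exists fs : I -> X -> RR, beurling_set d x0 xs ys M fs)).
Proof.
move=> d_metric xs_neq_ys [i0] _ M_def.
split=> [interp_E | [fs fsB] E]; last first.
  by apply: (beurling_interp_const d_metric xs_neq_ys i0 M_def fsB).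
have l1_neq0 (T : Type) (t : T) : exists u : l1 RR T, u <> 0.
  by exists (l1_delta RR t); exact: l1_delta_neq0.
have M_gt0 : 0 < M.
  rewrite M_def; apply: lt_le_trans ltr01 _; apply: lb_le_inf => [|k []//].
  exact: scalar_interp_set_neq0 d_metric (interp_E _ (l1_neq0 _ 0%N)).1.
apply: (beurling_limit d_metric xs_neq_ys) => n.
apply: (approx_beurling d_metric M_gt0 (interp_E _ (l1_neq0 _ i0)).2).
by rewrite invr_gt0 ltr0Sn.
Qed.
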